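(* Let $X$ be a real Banach space with $\dim X\ge 2$. If $S_P(X)<\frac{3-\sqrt5}{4}$, then $X$ has uniform normal structure.
   Context: For a real Banach space $X$ with unit sphere $S_X$, the P-angle constant is $S_P(X)=\sup\left\{\frac{\|x+y\|^2+\|x-y\|^2-4}{2\|x+y\|\,\|x-y\|}: x,y\in S_X,\ x\neq \pm y\right\}$. For a bounded closed convex $A\subseteq X$, $\operatorname{diam}A=\sup\{\|x-y\|:x,y\in A\}$ and the Chebyshev radius is $r(A)=\inf_{y\in A}\sup_{x\in A}\|x-y\|$. $X$ has uniform normal structure if $\inf\{\operatorname{diam}A/r(A)\}>1$, the infimum over all bounded closed convex subsets $A$ of $X$ with $\operatorname{diam}A>0$. *)

From HB Require Import structures.
From mathcomp Require Import all_boot all_order all_algebra.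
From mathcomp Require Import all_classical all_reals all_analysis.
Set Implicit Arguments. Unset Strict Implicit. Unset Printing Implicit Defensive.
Import Order.TTheory GRing.Theory Num.Theory.
Import numFieldNormedType.Exports.
Local Open Scope classical_set_scope.
Local Open Scope ring_scope.

Definition unit_sphere (R : realType) (X : normedModType R) : set X :=
  [set x | `|x| = 1].

Definition SP_const (R : realType) (X : normedModType R) : \bar R :=
  ereal_sup [set ((`|p.1 + p.2| ^+ 2 + `|p.1 - p.2| ^+ 2 - 4)
                   / (2 * `|p.1 + p.2| * `|p.1 - p.2|))%:E
            | p in [set x : X * X | unit_sphere x.1 /\ unit_sphere x.2
                                    /\ x.1 <> x.2 /\ x.1 <> - x.2]]%classic.

Definition convex_subset (R : realType) (X : normedModType R) (A : set X) :=
  forall x y (t : R), A x -> A y -> 0 <= t -> t <= 1 -> A (t *: x + (1 - t) *: y).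

Definition diam (R : realType) (X : normedModType R) (A : set X) : \bar R :=
  ereal_sup [set (`|p.1 - p.2|)%:E | p in [set p : X * X | A p.1 /\ A p.2]]%classic.

Definition cheb_radius (R : realType) (X : normedModType R) (A : set X) : \bar R :=
  ereal_inf [set ereal_sup [set (`|x - y|)%:E | x in A] | y in A]%classic.

(* Uniform normal structure: inf { diam A / r(A) : A bounded closed convex,
   diam A > 0 } > 1. For bounded A these quantities are finite reals. *)
Definition uniform_normal_structure (R : realType) (X : normedModType R) : Prop :=
  (1%:E < ereal_inf [set ((fine (diam A)) / (fine (cheb_radius A)))%:E
                    | A in [set A : set X | bounded_set A /\ closed A
                              /\ convex_subset A /\ (0%:E < diam A)%E]]%classic)%E.

Definition dim_ge2 (R : realType) (X : normedModType R) : Prop :=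
  exists x y : X, forall a b : R, a *: x + b *: y = 0 -> a = 0 /\ b = 0.

From HB Require Import structures.
From mathcomp Require Import all_boot all_order all_algebra.
From mathcomp Require Import all_classical all_reals all_analysis.
From mathcomp Require Import lra.

Set Implicit Arguments.
Unset Strict Implicit.
Unset Printing Implicit Defensive.
Import Order.TTheory GRing.Theory Num.Theory.
Import numFieldNormedType.Exports.
Local Open Scope ring_scope.

(* A small P-angle constant forces a uniform rotundity estimate: two vectors of
   the unit ball at distance at least 4/5 cannot have a sum of norm close to 2.
   Otherwise both are almost of norm 1, and their normalizations x, y satisfy
   |x + y| ~ 2 and |x - y| >= 0.798, which makes the P-angle quotient of (x, y)
   exceed 0.191 > (3 - sqrt 5)/4.  Such an estimate, i.e. a positive modulus of
   convexity at some eps < 1, yields uniform normal structure: if p, q is an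
   almost diametral pair of a set of diameter d, the midpoint of p and q lies
   within (1 - delta) d of every point of the set, while the Chebyshev radius
   is at least d/2 > 0. *)

Definition convexity_gap (R : realType) (X : normedModType R) (eps delta : R) :=
  forall a b : X, `|a| <= 1 -> `|b| <= 1 -> eps <= `|a - b| ->
  `|a + b| <= 2 * (1 - delta).

Section NormEstimates.
Variables (R : realType) (X : normedModType R).

Lemma norm_add_le_perturb (a b x y : X) :
  `|a + b| <= `|x + y| + `|x - a| + `|y - b|.
Proof.
have -> : a + b = (x + y) - ((x - a) + (y - b)).
  by rewrite opprD !opprB addrACA !addrA [x + a]addrC addrK addrAC addrK.
apply: le_trans (ler_normB _ _) _.
by rewrite -[leRHS]addrA lerD2l ler_normD.
Qed.

Lemma norm_sub_le_perturb (a b x y : X) :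
  `|a - b| <= `|x - y| + `|x - a| + `|y - b|.
Proof. by have := norm_add_le_perturb a (- b) x (- y); rewrite -opprD normrN. Qed.

Lemma norm_normalize (a : X) : 0 < `|a| -> `|(`|a|)^-1 *: a| = 1.
Proof. by move=> a0; rewrite normrZ ger0_norm ?invr_ge0 ?ltW // mulVf ?gt_eqF. Qed.

Lemma dist_normalize (a : X) : 0 < `|a| -> `|a| <= 1 ->
  `|(`|a|)^-1 *: a - a| = 1 - `|a|.
Proof.
move=> a0 a1; rewrite -[X in _ - X]scale1r -scalerBl normrZ ger0_norm.
  by rewrite mulrBl mulVf ?gt_eqF // mul1r.
by rewrite subr_ge0 invr_ge1 // unitfE gt_eqF.
Qed.

Lemma convexity_gap_scale (eps delta d : R) (a b : X) :
  convexity_gap X eps delta -> 0 < d -> `|a| <= d -> `|b| <= d ->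
  eps * d <= `|a - b| -> `|a + b| <= 2 * (1 - delta) * d.
Proof.
move=> gap d0 ad bd abd; have di : 0 < d^-1 by rewrite invr_gt0.
have := gap (d^-1 *: a) (d^-1 *: b).
rewrite -scalerDr -scalerBr !normrZ gtr0_norm //.
have le1 (u : R) : u <= d -> d^-1 * u <= 1 by move=> ud; rewrite mulrC ler_pdivrMr ?mul1r.
move=> /(_ (le1 _ ad) (le1 _ bd)).
have -> : eps <= d^-1 * `|a - b| by rewrite mulrC ler_pdivlMr.
by move=> /(_ isT); rewrite mulrC ler_pdivrMr.
Qed.

End NormEstimates.

Section ChebyshevRadius.
Variables (R : realType) (X : normedModType R) (A : set X).

Lemma dist_le_diam (p q : X) : A p -> A q -> (`|p - q|%:E <= diam A)%E.
Proof. by move=> Ap Aq; apply: ereal_sup_ubound; exists (p, q). Qed.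

Lemma diam_le_of_bounded (M : R) : (forall x, A x -> `|x| <= M) ->
  (diam A <= (2 * M)%:E)%E.
Proof.
move=> AM; apply: ge_ereal_sup => _ [[p q] /= [Ap Aq] <-]; rewrite lee_fin.
by apply: le_trans (ler_normB _ _) _; have := AM _ Ap; have := AM _ Aq; lra.
Qed.

Lemma half_dist_le_cheb_radius (p q : X) : A p -> A q ->
  ((`|p - q| / 2)%:E <= cheb_radius A)%E.
Proof.
move=> Ap Aq; apply: le_ereal_inf_tmp => _ [y Ay <-].
have pq : `|p - q| <= `|p - y| + `|q - y|.
  by have := ler_normB (p - y) (q - y); rewrite opprB addrA subrK.
have [py|yp] := leP (`|p - q| / 2) `|p - y|.
  apply: (@le_trans _ _ (`|p - y|)%:E); first by rewrite lee_fin.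
  by apply: ereal_sup_ubound; exists p.
apply: (@le_trans _ _ (`|q - y|)%:E); first by rewrite lee_fin; lra.
by apply: ereal_sup_ubound; exists q.
Qed.

Lemma cheb_radius_le_center (m : X) (rho : R) : A m ->
  (forall z, A z -> `|z - m| <= rho) -> (cheb_radius A <= rho%:E)%E.
Proof.
move=> Am Hm; apply: le_trans (ge_ereal_sup _).
  by apply: ereal_inf_lbound; exists m.
by move=> _ [z Az <-]; rewrite lee_fin; exact: Hm.
Qed.

Lemma convex_midpoint (p q : X) : convex_subset A -> A p -> A q ->
  A ((1 / 2 : R) *: (p + q)).
Proof.
move=> cvA Ap Aq; have := cvA p q (1 / 2 : R) Ap Aq ltac:(lra) ltac:(lra).
have -> : 1 - 1 / 2 = 1 / 2 :> R by lra.
by rewrite scalerDr.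
Qed.

End ChebyshevRadius.

Lemma dist_midpoint (R : realType) (X : normedModType R) (z p q : X) :
  `|z - (1 / 2 : R) *: (p + q)| = (1 / 2 : R) * `|(z - p) + (z - q)|.
Proof.
have -> : z - (1 / 2 : R) *: (p + q) = (1 / 2 : R) *: ((z - p) + (z - q)).
  rewrite addrACA -opprD scalerBr -mulr2n -scalerMnr scalerMnl.
  have -> : (1 / 2) *+ 2 = 1 :> R by rewrite -mulr_natr; lra.
  by rewrite scale1r.
by rewrite normrZ gtr0_norm //; lra.
Qed.

Section UniformNormalStructure.
Variables (R : realType) (X : normedModType R) (eps delta : R).
Hypotheses (eps_lt1 : eps < 1) (delta_gt0 : 0 < delta) (delta_lt1 : delta < 1).
Hypothesis gap : convexity_gap X eps delta.

Lemma cheb_radius_gt0 (A : set X) : (0 < diam A)%E -> (0 < cheb_radius A)%E.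
Proof.
move=> /ereal_sup_gt [_ [[p q] /= [Ap Aq] <-]]; rewrite lte_fin => pq.
by apply: lt_le_trans (half_dist_le_cheb_radius Ap Aq); rewrite lte_fin divr_gt0.
Qed.

(* The midpoint of an almost diametral pair is a good Chebyshev center. *)
Lemma cheb_radius_le_of_gap (A : set X) (d : R) : convex_subset A ->
  diam A = d%:E -> 0 < d -> (cheb_radius A <= ((1 - delta) * d)%:E)%E.
Proof.
move=> cvA dA d0.
have : ((eps * d)%:E < diam A)%E.
  by rewrite dA lte_fin -subr_gt0 -[X in X - _]mul1r -mulrBl mulr_gt0 ?subr_gt0.
move=> /ereal_sup_gt [_ [[p q] /= [Ap Aq] <-]]; rewrite lte_fin => pq.
apply: (cheb_radius_le_center (convex_midpoint cvA Ap Aq)) => z Az.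
have zp := dist_le_diam Az Ap; have zq := dist_le_diam Az Aq.
rewrite dA lee_fin in zp; rewrite dA lee_fin in zq.
have zpq : eps * d <= `|(z - p) - (z - q)|.
  by rewrite opprB addrC addrA subrK distrC ltW.
rewrite dist_midpoint.
have := convexity_gap_scale gap d0 zp zq zpq.
rewrite -mulrA; set t := (1 - delta) * d; lra.
Qed.

Lemma uniform_normal_structure_of_gap : uniform_normal_structure X.
Proof.
apply: (@lt_le_trans _ _ ((1 - delta)^-1)%:E).
  by rewrite lte_fin invf_gt1 ?subr_gt0 // gtrBl.
apply: le_ereal_inf_tmp => _ [A [[M [_ AM]] [_ [cvA dA0]]] <-].
have AM1 x : A x -> `|x| <= M + 1.
  by move=> Ax; apply: (AM (M + 1)) => //; rewrite ltrDl.
have := diam_le_of_bounded AM1; have := cheb_radius_gt0 dA0.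
case Ed: (diam A) dA0 => [d| |] //; rewrite lte_fin => d0 r0 _.
have := cheb_radius_le_of_gap cvA Ed d0.
case Er: (cheb_radius A) r0 => [r| |] //; rewrite lte_fin lee_fin /= => r0 rd.
by rewrite lee_fin ler_pdivlMr // ler_pdivrMl ?subr_gt0.
Qed.

End UniformNormalStructure.

Lemma P_angle_quotient_le_SP_const (R : realType) (X : normedModType R) (x y : X) :
  `|x| = 1 -> `|y| = 1 -> x <> y -> x <> - y ->
  (((`|x + y| ^+ 2 + `|x - y| ^+ 2 - 4) / (2 * `|x + y| * `|x - y|))%:E
    <= SP_const X)%E.
Proof. by move=> xn yn xy xNy; apply: ereal_sup_ubound; exists (x, y). Qed.

Lemma P_angle_quotient_numerator_ge (R : realType) (A B : R) :
  1997/1000 <= A <= 2 -> 798/1000 <= B ->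
  191/1000 * (2 * A * B) <= A ^+ 2 + B ^+ 2 - 4.
Proof.
move=> /andP[A_ge A_le] B_ge.
have A2 : 1997/1000 * (1997/1000) <= A ^+ 2 by rewrite expr2; apply: ler_pM; lra.
have B2 : 34/1000 * (798/1000) <= (B - 764/1000) * B by apply: ler_pM; lra.
have AB : A * B <= 2 * B by rewrite ler_pM2r //; lra.
have -> : 191/1000 * (2 * A * B) = 382/1000 * (A * B) by rewrite !mulrA; congr (_ * _); lra.
move: B2; rewrite mulrBl -expr2 => B2.
move: A2 B2 AB; set AA := A ^+ 2; set BB := B ^+ 2; set P := A * B; lra.
Qed.

(* Normalizing a and b moves them by at most 1/1000 each, so a nearly maximal
   |a + b| gives unit vectors x, y with |x + y| >= 1.997 and |x - y| >= 0.798. *)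
Lemma convexity_gap_of_SP_const (R : realType) (X : normedModType R) :
  (SP_const X < (191/1000)%:E)%E -> convexity_gap X (4/5) (1/2000).
Proof.
move=> SP_lt a b a1 b1 ab; rewrite leNgt; apply/negP => sum_gt.
have a_b := ler_normD a b.
have a0 : 1 - 1/1000 < `|a| by lra.
have b0 : 1 - 1/1000 < `|b| by lra.
have xn := @norm_normalize _ _ a ltac:(lra).
have yn := @norm_normalize _ _ b ltac:(lra).
have xa := @dist_normalize _ _ a ltac:(lra) a1.
have yb := @dist_normalize _ _ b ltac:(lra) b1.
set x := (`|a|)^-1 *: a in xn xa; set y := (`|b|)^-1 *: b in yn yb.
have := norm_add_le_perturb a b x y; have := norm_sub_le_perturb a b x y.
rewrite xa yb => ab_le sum_le.
have A_le : `|x + y| <= 2 by apply: le_trans (ler_normD _ _) _; rewrite xn yn; lra.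
have xy : x <> y by move=> exy; move: ab_le; rewrite exy subrr normr0; lra.
have xNy : x <> - y by move=> exy; move: sum_le; rewrite exy addNr normr0; lra.
have := le_lt_trans (P_angle_quotient_le_SP_const xn yn xy xNy) SP_lt.
have A_bd : 1997/1000 <= `|x + y| <= 2 by apply/andP; split; lra.
have B_bd : 798/1000 <= `|x - y| by lra.
rewrite lte_fin ltr_pdivrMr; last by rewrite !mulr_gt0 //; lra.
by rewrite ltNge P_angle_quotient_numerator_ge.
Qed.

Lemma sqrt5_threshold_le (R : realType) : (3 - Num.sqrt 5) / 4 <= 191/1000 :> R.
Proof.
have s5 := sqrtr_ge0 (5 : R).
have s5e : Num.sqrt (5 : R) ^+ 2 = 5 by rewrite sqr_sqrtr.
nra.
Qed.

Theorem theorem5p4 (R : realType) (X : completeNormedModType R) :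
  dim_ge2 X ->
  (SP_const X < ((3 - Num.sqrt 5) / 4)%:E)%E ->
  uniform_normal_structure X.
Proof.
move=> _ SP_lt.
have SP_small : (SP_const X < (191/1000)%:E)%E.
  by apply: lt_le_trans SP_lt _; rewrite lee_fin sqrt5_threshold_le.
have gap := convexity_gap_of_SP_const SP_small.
by apply: (uniform_normal_structure_of_gap _ _ _ gap); lra.
Qed.
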